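(* Let $A$ be a Leibniz algebra over $k$ satisfying Condition 1. Then the two constructions of $\mathfrak{B}(A)$, using the bracket of Definition 4.1 and the bracket of Definition 4.2 respectively, give the same algebra.
   Context: $k$ is a commutative ring with unit. A Leibniz algebra is a $k$-module $L$ with a bilinear bracket satisfying $[x,[y,z]]=[[x,y],z]-[[x,z],y]$. An action of a Leibniz algebra $B$ on a Leibniz algebra $A$ is a pair of bilinear maps $B\times A\to A$, $(b,a)\mapsto[b,a]$, and $A\times B\to A$, $(a,b)\mapsto[a,b]$, such that for all $a,a_1,a_2\in A$, $b,b_1,b_2\in B$: $[a_1,[a_2,b]]=[[a_1,a_2],b]-[[a_1,b],a_2]$; $[a_1,[b,a_2]]=[[a_1,b],a_2]-[[a_1,a_2],b]$; $[b,[a_1,a_2]]=[[b,a_1],a_2]-[[b,a_2],a_1]$; $[a,[b_1,b_2]]=[[a,b_1],b_2]-[[a,b_2],b_1]$; $[b_1,[a,b_2]]=[[b_1,a],b_2]-[[b_1,b_2],a]$; $[b_1,[b_2,a]]=[[b_1,b_2],a]-[[b_1,a],b_2]$. Condition 1: for any two Leibniz algebras $B,C$ acting on $A$, $[c,[a,b]]=-[c,[b,a]]$ for all $a\in A$, $b\in B$, $c\in C$. Construction of $\mathfrak{B}(A)$: let $(B_j)_{j\in J}$ range over all Leibniz algebras equipped with an action on $A$ (one index per action). For $b\in B_j$ let $\mathbf b$ be the pair of $k$-linear maps $A\to A$, $a\mapsto[a,\mathbf b]:=[a,b]$ and $a\mapsto[\mathbf b,a]:=[b,a]$. On pairs $x=([-,x],[x,-])$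 of $k$-linear maps $A\to A$ define addition and scalar multiplication componentwise, and a bracket $[x,y]$ by either Definition 4.1: $[a,[x,y]]=[[a,x],y]-[[a,y],x]$, $[[x,y],a]=[x,[y,a]]+[[x,a],y]$; or Definition 4.2: $[a,[x,y]]=[[a,x],y]-[[a,y],x]$, $[[x,y],a]=-[x,[a,y]]+[[x,a],y]$. $\mathfrak{B}(A)$ is the set of pairs obtained from all the $\mathbf b$ by iterating these operations, with these operations. *)

From HB Require Import structures.
From mathcomp Require Import all_boot all_algebra.
Set Implicit Arguments. Unset Strict Implicit. Unset Printing Implicit Defensive.
Import GRing.Theory.
Local Open Scope ring_scope.

Record leibniz_alg (k : comPzRingType) := LeibnizAlg {
  carrier :> lmodType k;
  lbr : carrier -> carrier -> carrier;
  lbr_linl : forall (c : k) (x y z : carrier),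
      lbr (c *: x + y) z = c *: lbr x z + lbr y z;
  lbr_linr : forall (c : k) (x y z : carrier),
      lbr x (c *: y + z) = c *: lbr x y + lbr x z;
  lbr_leibniz : forall x y z : carrier,
      lbr x (lbr y z) = lbr (lbr x y) z - lbr (lbr x z) y
}.

(* An action of the Leibniz algebra B on the Leibniz algebra A:
   actl b a = [b,a]  and  actr a b = [a,b]. *)
Record action (k : comPzRingType) (B A : leibniz_alg k) := Action {
  actl : B -> A -> A;
  actr : A -> B -> A;
  actl_linl : forall (c : k) (b1 b2 : B) (a : A),
      actl (c *: b1 + b2) a = c *: actl b1 a + actl b2 a;
  actl_linr : forall (c : k) (b : B) (a1 a2 : A),
      actl b (c *: a1 + a2) = c *: actl b a1 + actl b a2;
  actr_linl : forall (c : k) (a1 a2 : A) (b : B),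
      actr (c *: a1 + a2) b = c *: actr a1 b + actr a2 b;
  actr_linr : forall (c : k) (a : A) (b1 b2 : B),
      actr a (c *: b1 + b2) = c *: actr a b1 + actr a b2;
  act_ax1 : forall (a1 a2 : A) (b : B),
      lbr a1 (actr a2 b) = actr (lbr a1 a2) b - lbr (actr a1 b) a2;
  act_ax2 : forall (a1 a2 : A) (b : B),
      lbr a1 (actl b a2) = lbr (actr a1 b) a2 - actr (lbr a1 a2) b;
  act_ax3 : forall (a1 a2 : A) (b : B),
      actl b (lbr a1 a2) = lbr (actl b a1) a2 - lbr (actl b a2) a1;
  act_ax4 : forall (a : A) (b1 b2 : B),
      actr a (lbr b1 b2) = actr (actr a b1) b2 - actr (actr a b2) b1;
  act_ax5 : forall (a : A) (b1 b2 : B),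
      actl b1 (actr a b2) = actr (actl b1 a) b2 - actl (lbr b1 b2) a;
  act_ax6 : forall (a : A) (b1 b2 : B),
      actl b1 (actl b2 a) = actl (lbr b1 b2) a - actr (actl b1 a) b2
}.

Definition condition1 (k : comPzRingType) (A : leibniz_alg k) : Prop :=
  forall (B C : leibniz_alg k) (actB : action B A) (actC : action C A)
         (a : A) (b : B) (c : C),
    actl actC c (actr actB a b) = - actl actC c (actl actB b a).

(* A "pair" x = ([-,x],[x,-]) of maps A -> A:
   fst x a = [a,x], snd x a = [x,a]. *)
Definition pair_of (k : comPzRingType) (A : leibniz_alg k) : Type :=
  ((A -> A) * (A -> A))%type.

Definition pair_add (k : comPzRingType) (A : leibniz_alg k)
  (x y : pair_of A) : pair_of A :=
  (fun a => x.1 a + y.1 a, fun a => x.2 a + y.2 a).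

Definition pair_scale (k : comPzRingType) (A : leibniz_alg k)
  (c : k) (x : pair_of A) : pair_of A :=
  (fun a => c *: x.1 a, fun a => c *: x.2 a).

(* Definition 4.1:
   [a,[x,y]] = [[a,x],y] - [[a,y],x],  [[x,y],a] = [x,[y,a]] + [[x,a],y]. *)
Definition bracket41 (k : comPzRingType) (A : leibniz_alg k)
  (x y : pair_of A) : pair_of A :=
  (fun a => y.1 (x.1 a) - x.1 (y.1 a),
   fun a => x.2 (y.2 a) + y.1 (x.2 a)).

(* Definition 4.2:
   [a,[x,y]] = [[a,x],y] - [[a,y],x],  [[x,y],a] = -[x,[a,y]] + [[x,a],y]. *)
Definition bracket42 (k : comPzRingType) (A : leibniz_alg k)
  (x y : pair_of A) : pair_of A :=
  (fun a => y.1 (x.1 a) - x.1 (y.1 a),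
   fun a => - x.2 (y.1 a) + y.1 (x.2 a)).

Definition pair_of_elt (k : comPzRingType) (A B : leibniz_alg k)
  (act : action B A) (b : B) : pair_of A :=
  (fun a => actr act a b, fun a => actl act b a).

Inductive frakB (k : comPzRingType) (A : leibniz_alg k)
    (br : pair_of A -> pair_of A -> pair_of A) : pair_of A -> Prop :=
  | frakB_gen : forall (B : leibniz_alg k) (act : action B A) (b : B),
      frakB br (pair_of_elt act b)
  | frakB_add : forall x y, frakB br x -> frakB br y -> frakB br (pair_add x y)
  | frakB_scale : forall (c : k) x, frakB br x -> frakB br (pair_scale c x)
  | frakB_br : forall x y, frakB br x -> frakB br y -> frakB br (br x y).

From mathcomp Require Import all_boot all_algebra.
From Stdlib Require Import FunctionalExtensionality.
Import GRing.Theory.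
Local Open Scope ring_scope.
Set Implicit Arguments. Unset Strict Implicit.

(** The two brackets differ only in the second component, by
    [[x,[y,a]] + [x,[a,y]] = [x, [y,a] + [a,y]]].  Condition 1 says that
    [[a,y] + [y,a]] is killed by every left action on [A] when [y] comes from
    an action; we call such elements left-null.  Hence both brackets agree on
    the pairs [x] whose components are additive, whose left component
    [[x,-]] kills left-null elements and for which [[a,x] + [x,a]] is always
    left-null.  These admissible pairs contain the generators and are closed
    under addition, scaling and the bracket, so both generation processes
    stay inside them and produce the same set. *)

Section AdditiveMaps.
Variables (U V : zmodType) (f : U -> V).
Hypothesis fD : {morph f : u v / u + v}.

Lemma add_morph0 : f 0 = 0.
Proof. by apply: (@addrI _ (f 0)); rewrite -fD !addr0. Qed.

Lemma add_morphN : {morph f : u / - u}.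
Proof. by move=> u; apply/eqP; rewrite -addr_eq0 -fD addNr add_morph0. Qed.

End AdditiveMaps.

Section Admissible.
Variables (k : comPzRingType) (A : leibniz_alg k).

Section ActionLinearity.
Variables (C : leibniz_alg k) (act : action C A) (c : C).

Lemma actlD : {morph actl act c : u v / u + v}.
Proof. by move=> u v; have := actl_linr act 1 c u v; rewrite !scale1r. Qed.

Lemma actlZ (s : k) (u : A) : actl act c (s *: u) = s *: actl act c u.
Proof.
by have := actl_linr act s c u 0; rewrite !addr0 (add_morph0 actlD) addr0.
Qed.

Lemma actrD : {morph actr act ^~ c : u v / u + v}.
Proof. by move=> u v; have := actr_linl act 1 u v c; rewrite !scale1r. Qed.

End ActionLinearity.

Definition left_null (w : A) : Prop :=
  forall (C : leibniz_alg k) (act : action C A) (c : C), actl act c w = 0.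

Lemma left_nullD u v : left_null u -> left_null v -> left_null (u + v).
Proof. by move=> nu nv C act c; rewrite actlD nu nv addr0. Qed.

Lemma left_nullN u : left_null u -> left_null (- u).
Proof. by move=> nu C act c; rewrite (add_morphN (actlD act c)) nu oppr0. Qed.

Lemma left_nullZ (s : k) u : left_null u -> left_null (s *: u).
Proof. by move=> nu C act c; rewrite actlZ nu scaler0. Qed.

Definition admissible (x : pair_of A) : Prop :=
  [/\ {morph x.1 : u v / u + v}, {morph x.2 : u v / u + v},
      forall w, left_null w -> x.2 w = 0 &
      forall a, left_null (x.1 a + x.2 a)].

Lemma admissible_gen :
  condition1 A ->
  forall (B : leibniz_alg k) (act : action B A) (b : B), admissible (pair_of_elt act b).
Proof.
move=> cond1 B act b; split=> //=; [exact: actrD | exact: actlD |].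
by move=> a C actC c; rewrite actlD cond1 addNr.
Qed.

Lemma admissible_add x y :
  admissible x -> admissible y -> admissible (pair_add x y).
Proof.
move=> [x1 x2 x3 x4] [y1 y2 y3 y4]; split=> /=.
- by move=> u v; rewrite x1 y1 addrACA.
- by move=> u v; rewrite x2 y2 addrACA.
- by move=> w nw; rewrite x3 // y3 // addr0.
- by move=> a; rewrite addrACA; apply: left_nullD.
Qed.

Lemma admissible_scale (s : k) x : admissible x -> admissible (pair_scale s x).
Proof.
move=> [x1 x2 x3 x4]; split=> /=.
- by move=> u v; rewrite x1 scalerDr.
- by move=> u v; rewrite x2 scalerDr.
- by move=> w nw; rewrite x3 // scaler0.
- by move=> a; rewrite -scalerDr; apply: left_nullZ.
Qed.

Lemma admissible_left_null x w : admissible x -> left_null w -> left_null (x.1 w).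
Proof. by move=> [_ _ x3 x4] nw; rewrite -[x.1 w]addr0 -(x3 w nw). Qed.

Lemma admissible_bracket42 x y :
  admissible x -> admissible y -> admissible (bracket42 x y).
Proof.
move=> ax ay; have [x1 x2 x3 x4] := ax; have [y1 y2 y3 y4] := ay.
split=> /=.
- by move=> u v; rewrite x1 y1 (y1 u v) x1 opprD addrACA.
- by move=> u v; rewrite (y1 u v) x2 (x2 u v) y1 opprD addrACA.
- move=> w nw; rewrite (x3 w nw) (x3 _ (admissible_left_null ay nw)).
  by rewrite (add_morph0 y1) oppr0 addr0.
- move=> a.
  have -> : y.1 (x.1 a) - x.1 (y.1 a) + (- x.2 (y.1 a) + y.1 (x.2 a))
          = y.1 (x.1 a + x.2 a) - (x.1 (y.1 a) + x.2 (y.1 a)).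
    by rewrite y1 opprD [- x.2 _ + _]addrC addrACA.
  by apply: left_nullD; [apply: admissible_left_null | apply: left_nullN].
Qed.

Lemma bracket41_eq_bracket42 x y :
  admissible x -> admissible y -> bracket41 x y = bracket42 x y.
Proof.
move=> [_ x2 x3 _] [_ _ _ y4]; congr pair; apply: functional_extensionality => a.
by congr (_ + _); apply/eqP; rewrite -addr_eq0 addrC -x2 x3.
Qed.

End Admissible.

Section Generation.
Variables (k : comPzRingType) (A : leibniz_alg k).
Implicit Types (br : pair_of A -> pair_of A -> pair_of A) (P : pair_of A -> Prop).

Definition frakB_closed br P : Prop :=
  [/\ forall (B : leibniz_alg k) (act : action B A) (b : B), P (pair_of_elt act b),
      forall x y, P x -> P y -> P (pair_add x y),
      forall (c : k) x, P x -> P (pair_scale c x) &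
      forall x y, P x -> P y -> P (br x y)].

Lemma frakB_min br P : frakB_closed br P -> forall x, frakB br x -> P x.
Proof. by case=> gen add scale brP x; elim=> *; auto. Qed.

Lemma frakB_closed_eq br1 br2 P :
    (forall x y, P x -> P y -> br1 x y = br2 x y) ->
  frakB_closed br2 P -> frakB_closed br1 P.
Proof.
by move=> eq12 [gen add scale brP]; split=> // x y Px Py; rewrite eq12 //; apply: brP.
Qed.

Lemma frakB_sub br1 br2 P :
    (forall x y, P x -> P y -> br1 x y = br2 x y) ->
  frakB_closed br1 P -> forall x, frakB br1 x -> frakB br2 x.
Proof.
move=> eq12 [gen add scale brP].
suff /frakB_min sub : frakB_closed br1 (fun x => P x /\ frakB br2 x).
  by move=> x /sub [].
split.
- by move=> B act b; split; [exact: gen | exact: frakB_gen].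
- by move=> x y [Px Bx] [Py By]; split; [exact: add | exact: frakB_add].
- by move=> c x [Px Bx]; split; [exact: scale | exact: frakB_scale].
- move=> x y [Px Bx] [Py By]; split; first exact: brP.
  by rewrite eq12 //; exact: frakB_br.
Qed.

Lemma frakB_congr br1 br2 P :
    (forall x y, P x -> P y -> br1 x y = br2 x y) ->
  frakB_closed br2 P -> forall x, frakB br1 x <-> frakB br2 x.
Proof.
move=> eq12 closed2 x; split; first exact: (frakB_sub eq12 (frakB_closed_eq eq12 closed2)).
by apply: (frakB_sub _ closed2) => y z Py Pz; rewrite eq12.
Qed.

End Generation.

Theorem proposition4p3 (k : comPzRingType) (A : leibniz_alg k) :
  condition1 A ->
  (forall x : pair_of A, frakB (@bracket41 k A) x <-> frakB (@bracket42 k A) x) /\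
  (forall x y : pair_of A, frakB (@bracket41 k A) x -> frakB (@bracket41 k A) y ->
     bracket41 x y = bracket42 x y).
Proof.
move=> cond1.
have closed42 : frakB_closed (@bracket42 k A) (@admissible k A).
  split; [exact: admissible_gen cond1 | exact: admissible_add |
          exact: admissible_scale | exact: admissible_bracket42].
have closed41 := frakB_closed_eq (@bracket41_eq_bracket42 k A) closed42.
split; first exact: frakB_congr (@bracket41_eq_bracket42 k A) closed42.
move=> x y /(frakB_min closed41) ax /(frakB_min closed41) ay.
exact: bracket41_eq_bracket42.
Qed.
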